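(* Let $\mathfrak M$ be a finite dimensional right $\mathbb H$-linear space of $\mathbb H^r$-valued functions, each of which is given in a neighborhood of the origin by a convergent series $f=\sum_{n\ge0}P_nf_n$ with $f_n\in\mathbb H^r$ (as is the case for functions hyperholomorphic of axial type near the origin). Then $\mathfrak M$ is invariant under $R_0:\sum_nP_nf_n\mapsto\sum_nP_nf_{n+1}$ if and only if there exist $N\in\mathbb N$ and matrices $(\mathsf C,\mathsf A)\in\mathbb H^{r\times N}\times\mathbb H^{N\times N}$ such that $\mathfrak M=\{\sum_{n\ge0}P_n\mathsf C\mathsf A^n\xi:\ \xi\in\mathbb H^N\}$. Moreover, for any such pair, $N\ge\dim\mathfrak M$, with equality if and only if the pair is observable, i.e. $\bigcap_{n\ge0}\ker\mathsf C\mathsf A^n=\{0\}$.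
   Context: For $m\ge0$, $T^m_j=\frac{2(m-j+1)}{(m+1)(m+2)}$, $c_m=\sum_{j=0}^m(-1)^jT^m_j$, $P_m(x)=\frac1{c_m}\sum_{j=0}^mT^m_jx^{m-j}\overline{x}^{\,j}$ for quaternions $x$, $\overline x$ the quaternionic conjugate. These polynomials are Fueter hyperholomorphic and a function expanded as $\sum_nP_nf_n$ determines its coefficients uniquely. *)

From HB Require Import structures.
From mathcomp Require Import all_boot all_order all_algebra.
From mathcomp Require Import ring.
From mathcomp Require Import all_classical all_reals all_analysis.

Set Implicit Arguments.
Unset Strict Implicit.
Unset Printing Implicit Defensive.

Import Order.TTheory GRing.Theory Num.Theory.
Import numFieldNormedType.Exports.
Local Open Scope classical_set_scope.
Local Open Scope ring_scope.

Record quat (R : Type) := Quat { q0 : R; q1 : R; q2 : R; q3 : R }.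

Section Quaternions.
Variable R : realType.

Definition quat_to (q : quat R) := (q0 q, q1 q, q2 q, q3 q).
Definition quat_of (t : R * R * R * R) :=
  let: (a, b, c, d) := t in Quat a b c d.
Lemma quat_toK : cancel quat_to quat_of. Proof. by case. Qed.

HB.instance Definition _ := Equality.copy (quat R) (can_type quat_toK).
HB.instance Definition _ := Choice.copy (quat R) (can_type quat_toK).

Definition qzero : quat R := Quat 0 0 0 0.
Definition qadd (x y : quat R) :=
  Quat (q0 x + q0 y) (q1 x + q1 y) (q2 x + q2 y) (q3 x + q3 y).
Definition qopp (x : quat R) := Quat (- q0 x) (- q1 x) (- q2 x) (- q3 x).

Lemma qaddA : associative qadd.
Proof. by case=> ? ? ? ? [? ? ? ?] [? ? ? ?]; rewrite /qadd /=; congr Quat; ring. Qed.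
Lemma qaddC : commutative qadd.
Proof. by case=> ? ? ? ? [? ? ? ?]; rewrite /qadd /=; congr Quat; ring. Qed.
Lemma qadd0 : left_id qzero qadd.
Proof. by case=> ? ? ? ?; rewrite /qadd /=; congr Quat; ring. Qed.
Lemma qaddN : left_inverse qzero qopp qadd.
Proof. by case=> ? ? ? ?; rewrite /qadd /=; congr Quat; ring. Qed.

HB.instance Definition _ := GRing.isZmodule.Build (quat R) qaddA qaddC qadd0 qaddN.

Definition qone : quat R := Quat 1 0 0 0.
(* Hamilton product: i^2 = j^2 = k^2 = ijk = -1 *)
Definition qmul (x y : quat R) :=
  Quat (q0 x * q0 y - q1 x * q1 y - q2 x * q2 y - q3 x * q3 y)
       (q0 x * q1 y + q1 x * q0 y + q2 x * q3 y - q3 x * q2 y)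
       (q0 x * q2 y - q1 x * q3 y + q2 x * q0 y + q3 x * q1 y)
       (q0 x * q3 y + q1 x * q2 y - q2 x * q1 y + q3 x * q0 y).

Lemma qmulA : associative qmul.
Proof. by case=> ? ? ? ? [? ? ? ?] [? ? ? ?]; rewrite /qmul /=; congr Quat; ring. Qed.
Lemma qmul1 : left_id qone qmul.
Proof. by case=> ? ? ? ?; rewrite /qmul /=; congr Quat; ring. Qed.
Lemma qmulr1 : right_id qone qmul.
Proof. by case=> ? ? ? ?; rewrite /qmul /=; congr Quat; ring. Qed.
Lemma qmulDl : left_distributive qmul qadd.
Proof. by case=> ? ? ? ? [? ? ? ?] [? ? ? ?]; rewrite /qmul /= /qadd /=; congr Quat; ring. Qed.
Lemma qmulDr : right_distributive qmul qadd.
Proof. by case=> ? ? ? ? [? ? ? ?] [? ? ? ?]; rewrite /qmul /= /qadd /=; congr Quat; ring. Qed.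
Lemma qone_neq0 : qone != 0.
Proof. by apply/eqP => -[] /eqP; rewrite oner_eq0. Qed.

HB.instance Definition _ := GRing.Zmodule_isNzRing.Build (quat R)
  qmulA qmul1 qmulr1 qmulDl qmulDr qone_neq0.

Definition qreal (a : R) : quat R := Quat a 0 0 0.
Definition qconj (x : quat R) : quat R := Quat (q0 x) (- q1 x) (- q2 x) (- q3 x).
Definition qnorm2 (x : quat R) : R := q0 x ^+ 2 + q1 x ^+ 2 + q2 x ^+ 2 + q3 x ^+ 2.

End Quaternions.

Notation "'H[ R ]" := (quat R) (at level 8, format "''H[' R ]").

Section Pm.
Variable R : realType.

Definition Tcoef (m j : nat) : R :=
  (2 * (m - j + 1)%:R) / ((m + 1)%:R * (m + 2)%:R).
Definition ccoef (m : nat) : R := \sum_(j < m.+1) (-1) ^+ j * Tcoef m j.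
Definition Ppoly (m : nat) (x : 'H[R]) : 'H[R] :=
  qreal (ccoef m)^-1 *
  \sum_(j < m.+1) qreal (Tcoef m j) * (x ^+ (m - j) * qconj x ^+ j).

Variable r : nat.
Definition vfun := 'H[R] -> 'cV['H[R]]_r.

Definition qvec_cvg (u : nat -> 'cV['H[R]]_r) (l : 'cV['H[R]]_r) : Prop :=
  forall i : 'I_r,
    [/\ (fun n => q0 (u n i 0)) @ \oo --> q0 (l i 0),
        (fun n => q1 (u n i 0)) @ \oo --> q1 (l i 0),
        (fun n => q2 (u n i 0)) @ \oo --> q2 (l i 0) &
        (fun n => q3 (u n i 0)) @ \oo --> q3 (l i 0)].

Definition Pseries_partial (c : nat -> 'cV['H[R]]_r) (x : 'H[R]) (N : nat)
  : 'cV['H[R]]_r := \sum_(n < N) Ppoly n x *: c n.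

Definition has_Pexpansion (f : vfun) (c : nat -> 'cV['H[R]]_r) : Prop :=
  exists2 eps : R, 0 < eps &
    forall x : 'H[R], qnorm2 x < eps -> qvec_cvg (Pseries_partial c x) (f x).

Definition germ_eq (f g : vfun) : Prop :=
  exists2 eps : R, 0 < eps & forall x : 'H[R], qnorm2 x < eps -> f x = g x.

Definition vrscale (v : 'cV['H[R]]_r) (a : 'H[R]) : 'cV['H[R]]_r :=
  \col_i (v i 0 * a).
Definition fzero : vfun := fun _ => 0.
Definition fadd (f g : vfun) : vfun := fun x => f x + g x.
Definition frscale (f : vfun) (a : 'H[R]) : vfun := fun x => vrscale (f x) a.

Definition right_subspace (M : vfun -> Prop) : Prop :=
  [/\ M fzero,
      forall f g, M f -> M g -> M (fadd f g) &
      forall f a, M f -> M (frscale f a)].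

Definition fcomb (d : nat) (b : 'I_d -> vfun) (a : 'I_d -> 'H[R]) : vfun :=
  fun x => \sum_(i < d) vrscale (b i x) (a i).

Definition is_basis (M : vfun -> Prop) (d : nat) (b : 'I_d -> vfun) : Prop :=
  [/\ forall i, M (b i),
      forall a, germ_eq (fcomb b a) fzero -> forall i, a i = 0 &
      forall f, M f -> exists a, germ_eq f (fcomb b a)].

Definition has_dim (M : vfun -> Prop) (d : nat) : Prop :=
  exists b : 'I_d -> vfun, is_basis M b.

Definition R0_invariant (M : vfun -> Prop) : Prop :=
  forall f c, M f -> has_Pexpansion f c ->
    exists2 g, M g & has_Pexpansion g (fun n => c n.+1).

Definition realized_by (M : vfun -> Prop) (N : nat)
  (C : 'M['H[R]]_(r, N)) (A : 'M['H[R]]_N) : Prop :=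
  (forall f, M f -> exists xi : 'cV['H[R]]_N,
       has_Pexpansion f (fun n => C *m (A ^+ n) *m xi)) /\
  (forall xi : 'cV['H[R]]_N, exists2 f, M f &
       has_Pexpansion f (fun n => C *m (A ^+ n) *m xi)).

Definition observable (N : nat) (C : 'M['H[R]]_(r, N)) (A : 'M['H[R]]_N) : Prop :=
  forall xi : 'cV['H[R]]_N, (forall n, C *m (A ^+ n) *m xi = 0) -> xi = 0.

End Pm.

From HB Require Import structures.
From mathcomp Require Import all_boot all_order all_algebra.
From mathcomp Require Import all_classical all_reals all_analysis.
From mathcomp Require Import ring lra.

(* The proof rests on one analytic fact: the coefficients f_n of an expansion
   f = sum_n P_n f_n are determined by f.  On the real axis P_n(t) = kappa_n t^n
   with kappa_n <> 0, so every real coordinate of the expansion becomes a real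
   power series, and power series coefficients are unique.  Consequently
   f |-> (f_n)_n is an injective right H-linear map on germs, and the theorem
   becomes linear algebra over the division ring H:
   - if b_1..b_d is a basis of M with coefficient sequences c_i(n), invariance
     under R0 gives c_i(n+1) = sum_j c_j(n) alpha_ji, so with C = [c_i(0)] and
     A = (alpha_ji) the coefficients of sum_i b_i xi_i are C A^n xi;
   - conversely a realization is R0-invariant, xi being shifted to A xi;
   - basis elements correspond to states x_1..x_d with independent outputs
     (C A^n x_i)_n, and a wide matrix over a division ring has a nonzero
     kernel, which yields d <= N and d = N <-> observability. *)

Set Implicit Arguments.
Unset Strict Implicit.
Unset Printing Implicit Defensive.

Import Order.TTheory GRing.Theory Num.Theory.
Import numFieldNormedType.Exports.
Local Open Scope classical_set_scope.
Local Open Scope ring_scope.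

Section QuaternionArithmetic.
Variable R : realType.
Implicit Types (a b : R) (x y : 'H[R]).

Lemma quatP x y :
  q0 x = q0 y -> q1 x = q1 y -> q2 x = q2 y -> q3 x = q3 y -> x = y.
Proof. by case: x => ? ? ? ?; case: y => ? ? ? ? /= -> -> -> ->. Qed.

Lemma qrealB : zmod_morphism (@qreal R).
Proof. by move=> a b; apply: quatP => /=; rewrite ?subr0. Qed.

Lemma qreal_monoid : monoid_morphism (@qreal R).
Proof. by split=> // a b; apply: quatP => /=; ring. Qed.

End QuaternionArithmetic.

HB.instance Definition _ (R : realType) :=
  GRing.isZmodMorphism.Build R 'H[R] (@qreal R) (@qrealB R).
HB.instance Definition _ (R : realType) :=
  GRing.isMonoidMorphism.Build R 'H[R] (@qreal R) (@qreal_monoid R).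

Section QuaternionDivision.
Variable R : realType.
Implicit Types (a : R) (x : 'H[R]).

Lemma qconj_real a : qconj (qreal a) = qreal a.
Proof. by apply: quatP => //=; rewrite oppr0. Qed.

Lemma qnorm2_real a : qnorm2 (qreal a) = a ^+ 2.
Proof. by rewrite /qnorm2 /= expr0n /= !addr0. Qed.

Lemma mulq_conj x : x * qconj x = qreal (qnorm2 x).
Proof. by apply: quatP; rewrite /qnorm2 /=; ring. Qed.

Lemma qnorm2_eq0 x : (qnorm2 x == 0) = (x == 0).
Proof.
by case: x => a b c d; rewrite /qnorm2 /= !paddr_eq0 ?addr_ge0 ?sqr_ge0 // !sqrf_eq0.
Qed.

Definition qinv x : 'H[R] := qconj x * qreal (qnorm2 x)^-1.

Lemma mulqV x : x != 0 -> x * qinv x = 1.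
Proof.
rewrite -qnorm2_eq0 => nz.
by rewrite /qinv mulrA mulq_conj -rmorphM mulfV // rmorph1.
Qed.

End QuaternionDivision.

Section DivisionRingKernels.
Variables (K : nzRingType) (inv : K -> K).
Hypothesis mulrV_nz : forall x : K, x != 0 -> x * inv x = 1.

Lemma mulr_nz_eq0 (x a : K) : a != 0 -> x * a = 0 -> x = 0.
Proof. by move=> a_nz xa0; rewrite -[x]mulr1 -(mulrV_nz a_nz) mulrA xa0 mul0r. Qed.

Lemma cV_neq0 m (v : 'cV[K]_m) : v != 0 -> exists i, v i 0 != 0.
Proof.
move=> v_nz; apply/existsP; apply: contraNT v_nz; rewrite negb_exists => /forallP v0.
by apply/eqP/matrixP => i j; rewrite (ord1 j) mxE; apply/eqP; rewrite -[_ == _]negbK.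
Qed.

(* Clearing a row with pivot entry x_j by the column operation
   a |-> a - e_j x_j^-1 (x a); other coordinates of a are untouched. *)
Definition pivot_clear m (x : 'rV[K]_m) (j : 'I_m) : 'M[K]_m :=
  1%:M - delta_mx j 0 *m (inv (x 0 j) *: x).

Lemma pivot_clearK m (x : 'rV[K]_m) j : x 0 j != 0 -> x *m pivot_clear x j = 0.
Proof.
move=> xj_nz; rewrite mulmxBr mulmx1 mulmxA -colE; apply/matrixP => i k.
by rewrite (ord1 i) !mxE big_ord1 !mxE mulrA mulrV_nz // mul1r subrr.
Qed.

Lemma pivot_clear_coord m (x : 'rV[K]_m) j (a : 'cV[K]_m) i :
  i != j -> (pivot_clear x j *m a) i 0 = a i 0.
Proof.
move=> ij; rewrite mulmxBl mul1mx -mulmxA !mxE big1 ?subr0 // => k _.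
by rewrite mxE (negbTE ij) mul0r.
Qed.

Lemma supported_kernel n m (X : 'M[K]_(n, m)) (P : {set 'I_m}) : (n < #|P|)%N ->
  exists a : 'cV[K]_m, [/\ a != 0, forall i, i \notin P -> a i 0 = 0 & X *m a = 0].
Proof.
elim: n X P => [|n IH] X P ltnP.
  have [j Pj] := card_gt0P ltnP; exists (delta_mx j 0); split; last by rewrite flatmx0.
  - by apply/eqP => /matrixP /(_ j 0) /eqP; rewrite !mxE !eqxx oner_eq0.
  - move=> i iP; have ij : i != j by apply: contraNneq iP => ->.
    by rewrite mxE (negbTE ij) mulr0n.
rewrite -[X](@vsubmxK _ 1 n); set x := usubmx _; set X' := dsubmx _.
case: (boolP [forall i in P, x 0 i == 0]) => [/forall_inP x0 | ].
  have [a [a_nz aP X'a]] := IH X' P (ltnW ltnP); exists a; split => //.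
  suff xa0 : x *m a = 0 by rewrite (mul_col_mx x X') X'a xa0 col_mx0.
  apply/matrixP => i k; rewrite (ord1 i) (ord1 k) !mxE big1 // => l _.
  by case: (boolP (l \in P)) => [/x0/eqP -> | /aP ->]; rewrite ?mul0r ?mulr0.
rewrite negb_forall_in => /existsP[j /andP[Pj xj_nz]].
have ltnPj : (n < #|P :\ j|)%N by move: ltnP; rewrite (cardsD1 j) Pj.
have [a' [a'_nz a'P Xa'0]] := IH (X' *m pivot_clear x j) _ ltnPj.
exists (pivot_clear x j *m a'); split.
- have [i a'i] := cV_neq0 a'_nz.
  have ij : i != j by apply: contraNneq a'i => ->; rewrite a'P // !inE eqxx.
  by apply/eqP => /matrixP /(_ i 0); rewrite pivot_clear_coord // mxE; apply/eqP.
- move=> i iP; have ij : i != j by apply: contraNneq iP => ->.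
  by rewrite pivot_clear_coord // a'P // !inE negb_and iP orbT.
- by rewrite (mul_col_mx x X') !mulmxA pivot_clearK // mul0mx Xa'0 col_mx0.
Qed.

Lemma wide_matrix_kernel n m (X : 'M[K]_(n, m)) : (n < m)%N ->
  exists2 a : 'cV[K]_m, a != 0 & X *m a = 0.
Proof.
move=> ltnm; have ltnT : (n < #|[set: 'I_m]%SET|)%N by rewrite cardsT card_ord.
by have [a [a_nz _ Xa0]] := supported_kernel X ltnT; exists a.
Qed.

End DivisionRingKernels.

Section PowerSeriesUniqueness.
Variable R : realType.

Lemma le0_of_linear_bound (x c d : R) :
  0 < d -> (forall t, 0 < t <= d -> x <= c * t) -> x <= 0.
Proof.
move=> d_gt0 x_le; apply/ler_addgt0Pr => eps eps_gt0; rewrite add0r.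
have c1_gt0 : 0 < `|c| + 1 by rewrite ltr_wpDl.
set t := Num.min d (eps / (`|c| + 1)).
have t_gt0 : 0 < t by rewrite lt_min d_gt0 divr_gt0.
have t_le : t <= eps / (`|c| + 1) by rewrite ge_min lexx orbT.
have tc_le : t * (`|c| + 1) <= eps by rewrite -ler_pdivlMr.
have ct_le : c * t <= `|c| * t by rewrite ler_wpM2r ?ler_norm // ltW.
have xt : x <= c * t by apply: x_le; rewrite t_gt0 ge_min lexx.
lra.
Qed.

Lemma geometric_tail_le (q : R) (m N : nat) : 0 <= q -> 2 * q <= 1 ->
  \sum_(m <= n < N) q ^+ n <= 2 * q ^+ m.
Proof.
move=> q_ge0 q_half; have qm_ge0 := exprn_ge0 m q_ge0.
have [mN|Nm] := leqP m N; last by rewrite big_geq ?mulr_ge0 // ltnW.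
have q_lt1 : q < 1 by lra.
rewrite -(subnKC mN) geometric_partial_tail geometric_seriesE ?lt_eqF //=.
have qk_ge0 := exprn_ge0 (N - m) q_ge0.
have head_le : q ^+ m * (1 - q ^+ (N - m)) <= q ^+ m by rewrite ler_piMr // gerBl.
rewrite ler_pdivrMr ?subr_gt0; [nra | lra].
Qed.

Lemma power_series_tail (a : nat -> R) (B t0 t : R) (m N : nat) :
  0 < t0 -> 0 <= t -> 2 * t <= t0 -> (forall n, `|a n * t0 ^+ n| <= B) ->
  `|\sum_(m <= n < N) a n * t ^+ n| <= 2 * B * (t / t0) ^+ m.
Proof.
move=> t0_gt0 t_ge0 t_le aB; set q := t / t0.
have q_ge0 : 0 <= q by rewrite divr_ge0 // ltW.
have q_half : 2 * q <= 1 by rewrite mulrA ler_pdivrMr // mul1r.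
have tE : t = q * t0 by rewrite divfK ?gt_eqF.
have B_ge0 : 0 <= B := le_trans (normr_ge0 _) (aB 0%N).
apply: (le_trans (ler_norm_sum _ _ _)).
apply: (@le_trans _ _ (\sum_(m <= n < N) B * q ^+ n)).
  apply: ler_sum => n _.
  have -> : a n * t ^+ n = (a n * t0 ^+ n) * q ^+ n by rewrite tE exprMn; ring.
  by rewrite normrM [`|q ^+ n|]ger0_norm ?exprn_ge0 // ler_wpM2r ?exprn_ge0.
by rewrite -mulr_sumr [2 * B]mulrC -mulrA ler_wpM2l // geometric_tail_le.
Qed.

(* By induction,
   the lowest possibly nonzero coefficient a_k satisfies |a_k| = O(t) as t -> 0. *)
Lemma power_series_coef_eq0 (a : nat -> R) (e : R) : 0 < e ->
  (forall t, 0 < t < e -> series (fun n => a n * t ^+ n) @ \oo --> 0) ->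
  forall k, a k = 0.
Proof.
move=> e_gt0 vanish; elim/ltn_ind => k IHk.
set t0 := e / 2; have t0_gt0 : 0 < t0 by rewrite divr_gt0.
have t0_lt : t0 < e by rewrite /t0; lra.
have [B aB] : exists B, forall n, `|a n * t0 ^+ n| <= B.
  have : cvgn (series (fun n => a n * t0 ^+ n)).
    by apply/cvg_ex; exists 0; apply: vanish; rewrite t0_gt0.
  move=> /cvg_series_bounded bnd.
  have [B aB] := (ex_bound (PF := globally_properfilter (a := 0%N) I) _).1 bnd.
  by exists B => n; apply: aB.
have key t : 0 < t -> 2 * t <= t0 -> `|a k| * t ^+ k <= 2 * B * (t / t0) ^+ k.+1.
  move=> t_gt0 t_le; set c := 2 * B * (t / t0) ^+ k.+1.
  have S0 : series (fun n => a n * t ^+ n) @ \oo --> 0 by apply: vanish; rewrite t_gt0 /=; lra.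
  have lim : (fun N => `|series (fun n => a n * t ^+ n) N| + c) @ \oo --> c.
    by rewrite -[X in _ --> X]add0r -(normr0 R); apply: cvgD (cvg_norm S0) (cvg_cst c).
  apply: (ler_cvg_to (cvg_cst _) lim); near=> N.
  have kN : (k < N)%N by near: N; exists k.+1.
  rewrite /series /= (@big_cat_nat _ _ _ k.+1) // big_nat_recr //= big1_seq ?add0r; last first.
    by move=> n /andP[_]; rewrite mem_index_iota => /andP[_ /IHk ->]; rewrite mul0r.
  set tail := \sum_(k.+1 <= n < N) _.
  have tail_le : `|tail| <= c := power_series_tail k.+1 N t0_gt0 (ltW t_gt0) t_le aB.
  have := ler_normB (a k * t ^+ k + tail) tail; rewrite addrK normrM normrX (gtr0_norm t_gt0).
  lra.
apply/normr0_eq0/eqP; rewrite eq_le normr_ge0 andbT.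
apply: (@le0_of_linear_bound _ (2 * B / t0 ^+ k.+1) (t0 / 2)) => [|t /andP[t_gt0 t_le]].
  by rewrite divr_gt0.
have tk_gt0 := exprn_gt0 k t_gt0.
rewrite -(ler_pM2r tk_gt0); apply: le_trans (key t t_gt0 _) _; first by lra.
suff -> : 2 * B * (t / t0) ^+ k.+1 = 2 * B / t0 ^+ k.+1 * t * t ^+ k by [].
by rewrite exprMn exprVn exprS; ring.
Unshelve. all: by end_near.
Qed.

End PowerSeriesUniqueness.

Section PolynomialsOnRealAxis.
Variable R : realType.

Definition kappa n : R := (ccoef R n)^-1 * \sum_(j < n.+1) Tcoef R n j.

Lemma Ppoly_real n (t : R) : Ppoly n (qreal t) = qreal (kappa n * t ^+ n).
Proof.
rewrite /Ppoly qconj_real.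
rewrite (eq_bigr (fun j : 'I_n.+1 => qreal (Tcoef R n j * t ^+ n))) => [|j _]; last first.
  by rewrite -exprD subnK ?leq_ord // -!rmorphXn -rmorphM.
by rewrite -rmorph_sum -rmorphM /kappa -mulrA mulr_suml.
Qed.

(* The alternating sum  sum_j (-1)^j (n - j + 1), which is c_n up to a
   positive factor. *)
Definition alt_sum n : R := \sum_(j < n.+1) (-1) ^+ j * (n - j + 1)%:R.

Lemma alt_sumS n : alt_sum n.+1 = n.+2%:R - alt_sum n.
Proof.
rewrite /alt_sum big_ord_recl /= expr0 mul1r subn0 addn1 -sumrN.
by congr (_ + _); apply: eq_bigr => i _; rewrite exprS subSS mulN1r mulNr.
Qed.

Lemma alt_sum_ge1 n : 1 <= alt_sum n <= n.+1%:R.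
Proof.
elim: n => [|n /andP[lb ub]]; first by rewrite /alt_sum big_ord1 expr0 mul1r lexx.
by rewrite alt_sumS -natr1; apply/andP; split; lra.
Qed.

Lemma ccoef_gt0 n : 0 < ccoef R n.
Proof.
have -> : ccoef R n = 2 / ((n + 1)%:R * (n + 2)%:R) * alt_sum n.
  by rewrite /ccoef /alt_sum mulr_sumr; apply: eq_bigr => j _; rewrite /Tcoef; ring.
have /andP[alt_ge1 _] := alt_sum_ge1 n.
by rewrite mulr_gt0 ?divr_gt0 ?mulr_gt0 ?ltr0n ?addn_gt0 ?orbT //; lra.
Qed.

Lemma kappa_neq0 n : kappa n != 0.
Proof.
rewrite mulf_neq0 ?invr_neq0 ?gt_eqF ?ccoef_gt0 //.
rewrite big_ord_recl ltr_pwDl ?sumr_ge0 // => [|i _]; rewrite /Tcoef.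
  by rewrite divr_gt0 ?mulr_gt0 ?ltr0n ?addn_gt0 ?orbT.
by rewrite divr_ge0 ?mulr_ge0.
Qed.

End PolynomialsOnRealAxis.

Section QuaternionConvergence.
Variable R : realType.

Definition qcvg (s : nat -> 'H[R]) (l : 'H[R]) : Prop :=
  [/\ (fun n => q0 (s n)) @ \oo --> q0 l, (fun n => q1 (s n)) @ \oo --> q1 l,
      (fun n => q2 (s n)) @ \oo --> q2 l & (fun n => q3 (s n)) @ \oo --> q3 l].

Lemma qvec_cvgP r (u : nat -> 'cV['H[R]]_r) (l : 'cV['H[R]]_r) :
  (forall i, qcvg (fun n => u n i 0) (l i 0)) -> qvec_cvg u l.
Proof. by []. Qed.

Lemma qcvg_cst (l : 'H[R]) : qcvg (fun=> l) l.
Proof. by split; apply: cvg_cst. Qed.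

Lemma qcvgD s s' l l' : qcvg s l -> qcvg s' l' -> qcvg (fun n => s n + s' n) (l + l').
Proof. by case=> ? ? ? ? [? ? ? ?]; split; apply: cvgD. Qed.

(* The coordinates of s_n * a are fixed real combinations of those of s_n. *)
Lemma qcvgMr s l a : qcvg s l -> qcvg (fun n => s n * a) (l * a).
Proof.
case=> h0 h1 h2 h3; split.
- exact: cvgB (cvgB (cvgB (cvgMl h0) (cvgMl h1)) (cvgMl h2)) (cvgMl h3).
- exact: cvgB (cvgD (cvgD (cvgMl h0) (cvgMl h1)) (cvgMl h2)) (cvgMl h3).
- exact: cvgD (cvgD (cvgB (cvgMl h0) (cvgMl h1)) (cvgMl h2)) (cvgMl h3).
- exact: cvgD (cvgB (cvgD (cvgMl h0) (cvgMl h1)) (cvgMl h2)) (cvgMl h3).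
Qed.

Lemma qcvg_unique s l l' : qcvg s l -> qcvg s l' -> l = l'.
Proof.
have uniq (u : nat -> R) (x y : R) : u @ \oo --> x -> u @ \oo --> y -> x = y.
  by move=> ux uy; exact: (cvg_unique (@Rhausdorff R) ux uy).
case=> a0 a1 a2 a3 [b0 b1 b2 b3].
by apply: quatP; [exact: uniq a0 b0 | exact: uniq a1 b1 | exact: uniq a2 b2 | exact: uniq a3 b3].
Qed.

Definition real_linear (pi : 'H[R] -> R) : Prop :=
  (forall x y, pi (x + y) = pi x + pi y) /\ forall a x, pi (qreal a * x) = a * pi x.

Lemma qcoord_linear :
  [/\ real_linear (@q0 R), real_linear (@q1 R), real_linear (@q2 R) & real_linear (@q3 R)].
Proof. by split; split => // a x /=; ring. Qed.

End QuaternionConvergence.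

Definition mxcols (T : Type) m d (v : 'I_d -> 'cV[T]_m) : 'M[T]_(m, d) :=
  \matrix_(k, i) v i k 0.

Lemma mxcolsMl (T : pzRingType) p m d (B : 'M[T]_(p, m)) (v : 'I_d -> 'cV[T]_m) :
  mxcols (fun i => B *m v i) = B *m mxcols v.
Proof.
by apply/matrixP => k i; rewrite !mxE; apply: eq_bigr => j _; rewrite mxE.
Qed.

Lemma col_mxcols (T : Type) m d (v : 'I_d -> 'cV[T]_m) j : col j (mxcols v) = v j.
Proof. by apply/matrixP => i k; rewrite !mxE (ord1 k). Qed.

Lemma matrix_colP (T : Type) m n (P Q : 'M[T]_(m, n)) :
  (forall j, col j P = col j Q) -> P = Q.
Proof. by move=> PQ; apply/matrixP => i j; have /matrixP/(_ i 0) := PQ j; rewrite !mxE. Qed.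

Section PExpansions.
Variables (R : realType) (r : nat).
Implicit Types (f g : vfun R r) (c : nat -> 'cV['H[R]]_r).

Lemma germ_eq_sym f g : germ_eq f g -> germ_eq g f.
Proof. by case=> e e_gt0 fg; exists e => // x /fg ->. Qed.

Lemma Pexpansion_germ f g c : has_Pexpansion f c -> germ_eq f g -> has_Pexpansion g c.
Proof.
move=> [e1 e1_gt0 fc] [e2 e2_gt0 fg]; exists (Num.min e1 e2); first by rewrite lt_min e1_gt0.
by move=> x; rewrite lt_min => /andP[x1 x2]; rewrite -(fg x x2); apply: fc.
Qed.

Lemma Pexpansion_germ_eq f g c :
  has_Pexpansion f c -> has_Pexpansion g c -> germ_eq f g.
Proof.
move=> [e1 e1_gt0 fc] [e2 e2_gt0 gc]; exists (Num.min e1 e2); first by rewrite lt_min e1_gt0.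
move=> x; rewrite lt_min => /andP[x1 x2]; apply/matrixP => i j; rewrite (ord1 j).
exact: qcvg_unique (fc x x1 i) (gc x x2 i).
Qed.

Lemma Pseries_partial_entry c x N i :
  Pseries_partial c x N i 0 = \sum_(n < N) Ppoly n x * c n i 0.
Proof. by rewrite summxE; apply: eq_bigr => n _; rewrite mxE. Qed.

Lemma Pexpansion0 : has_Pexpansion (@fzero R r) (fun=> 0).
Proof.
exists 1 => // x _; apply: qvec_cvgP => i; rewrite /fzero mxE.
have -> : (fun N => Pseries_partial (fun=> 0) x N i 0) = fun=> 0.
  by apply/funext => N; rewrite Pseries_partial_entry big1 // => n _; rewrite mxE mulr0.
exact: qcvg_cst.
Qed.

Lemma PexpansionD f g c c' : has_Pexpansion f c -> has_Pexpansion g c' ->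
  has_Pexpansion (fadd f g) (fun n => c n + c' n).
Proof.
move=> [e1 e1_gt0 fc] [e2 e2_gt0 gc]; exists (Num.min e1 e2); first by rewrite lt_min e1_gt0.
move=> x; rewrite lt_min => /andP[x1 x2]; apply: qvec_cvgP => i; rewrite /fadd mxE.
have -> : (fun N => Pseries_partial (fun n => c n + c' n) x N i 0) =
    fun N => Pseries_partial c x N i 0 + Pseries_partial c' x N i 0.
  apply/funext => N; rewrite !Pseries_partial_entry -big_split.
  by apply: eq_bigr => n _; rewrite mxE mulrDr.
exact: qcvgD (fc x x1 i) (gc x x2 i).
Qed.

Lemma PexpansionMr f c a :
  has_Pexpansion f c -> has_Pexpansion (frscale f a) (fun n => vrscale (c n) a).
Proof.
move=> [e e_gt0 fc]; exists e => // x xe; apply: qvec_cvgP => i; rewrite /frscale mxE.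
have -> : (fun N => Pseries_partial (fun n => vrscale (c n) a) x N i 0) =
    fun N => Pseries_partial c x N i 0 * a.
  apply/funext => N; rewrite !Pseries_partial_entry mulr_suml.
  by apply: eq_bigr => n _; rewrite mxE mulrA.
exact: qcvgMr (fc x xe i).
Qed.

Lemma sum_vrscale d (v : 'I_d -> 'cV['H[R]]_r) (a : 'I_d -> 'H[R]) :
  \sum_i vrscale (v i) (a i) = mxcols v *m \col_i a i.
Proof.
apply/matrixP => k l; rewrite (ord1 l) summxE !mxE.
by apply: eq_bigr => i _; rewrite !mxE.
Qed.

Lemma Pexpansion_fcomb d (b : 'I_d -> vfun R r) (cb : 'I_d -> nat -> 'cV['H[R]]_r) a :
  (forall i, has_Pexpansion (b i) (cb i)) ->
  has_Pexpansion (fcomb b a) (fun n => mxcols (cb^~ n) *m \col_i a i).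
Proof.
move=> bcb; have -> : (fun n => mxcols (cb^~ n) *m \col_i a i) =
    fun n => \sum_i vrscale (cb i n) (a i) by apply/funext => n; rewrite sum_vrscale.
rewrite /fcomb; elim: (index_enum _) => [|i s IH].
  have -> : (fun x => \sum_(i <- [::]) vrscale (b i x) (a i)) = @fzero R r.
    by apply/funext => x; rewrite big_nil.
  have -> : (fun n => \sum_(i <- [::]) vrscale (cb i n) (a i)) = fun=> 0.
    by apply/funext => n; rewrite big_nil.
  exact: Pexpansion0.
have -> : (fun x => \sum_(j <- i :: s) vrscale (b j x) (a j)) =
    fadd (frscale (b i) (a i)) (fun x => \sum_(j <- s) vrscale (b j x) (a j)).
  by apply/funext => x; rewrite big_cons.
have -> : (fun n => \sum_(j <- i :: s) vrscale (cb j n) (a j)) =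
    fun n => vrscale (cb i n) (a i) + \sum_(j <- s) vrscale (cb j n) (a j).
  by apply/funext => n; rewrite big_cons.
exact: PexpansionD (PexpansionMr (a i) (bcb i)) IH.
Qed.

Lemma Pseries_partial_real pi c (t : R) N i : real_linear pi ->
  pi (Pseries_partial c (qreal t) N i 0) =
  series (fun n => kappa R n * pi (c n i 0) * t ^+ n) N.
Proof.
case=> piD piR; have pi0 : pi 0 = 0 by move: (piR 0 0); rewrite rmorph0 !mul0r.
rewrite Pseries_partial_entry /series /= big_mkord (big_morph pi piD pi0).
by apply: eq_bigr => n _; rewrite Ppoly_real piR mulrAC.
Qed.

(* If two P-series converge along the real axis to the same limits, then,
   seen through a real-linear functional, their coefficients agree: the
   difference is a real power series vanishing on an interval. *)
Lemma real_axis_coef_unique pi f c c' i (e : R) : real_linear pi -> 0 < e ->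
  (forall t, 0 < t < e ->
     ((fun N => pi (Pseries_partial c (qreal t) N i 0)) @ \oo --> pi (f (qreal t) i 0)) /\
     ((fun N => pi (Pseries_partial c' (qreal t) N i 0)) @ \oo --> pi (f (qreal t) i 0))) ->
  forall n, pi (c n i 0) = pi (c' n i 0).
Proof.
move=> lin e_gt0 cv n; apply/eqP; rewrite -subr_eq0.
set a := fun m => kappa R m * (pi (c m i 0) - pi (c' m i 0)).
have vanish t : 0 < t < e -> series (fun m => a m * t ^+ m) @ \oo --> 0.
  move=> /cv[cvc cvc']; rewrite -(subrr (pi (f (qreal t) i 0))).
  have -> : series (fun m => a m * t ^+ m) = fun N =>
      pi (Pseries_partial c (qreal t) N i 0) - pi (Pseries_partial c' (qreal t) N i 0).
    apply/funext => N; rewrite !Pseries_partial_real // /series /= -sumrB.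
    by apply: eq_bigr => m _; rewrite /a mulrBr mulrBl.
  exact: cvgB cvc cvc'.
have /eqP := power_series_coef_eq0 e_gt0 vanish n.
by rewrite mulf_eq0 (negbTE (kappa_neq0 R n)).
Qed.

Lemma Pexpansion_unique f c c' : has_Pexpansion f c -> has_Pexpansion f c' -> c = c'.
Proof.
move=> [e1 e1_gt0 fc] [e2 e2_gt0 fc'].
set e := Num.min 1 (Num.min e1 e2).
have e_gt0 : 0 < e by rewrite !lt_min ltr01 e1_gt0 e2_gt0.
have near0 t : 0 < t < e -> qnorm2 (qreal t) < e1 /\ qnorm2 (qreal t) < e2.
  rewrite qnorm2_real !lt_min => /andP[t_gt0 /and3P[t1 te1 te2]].
  have tt : t ^+ 2 <= t by rewrite expr2 ler_piMl // ltW.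
  by split; apply: le_lt_trans tt _.
apply/funext => n; apply/matrixP => i j; rewrite (ord1 j).
have [l0 l1 l2 l3] := qcoord_linear R.
apply: quatP; apply: (real_axis_coef_unique (f := f) _ e_gt0) => //.
all: by move=> t /near0[/fc/(_ i)[? ? ? ?] /fc'/(_ i)[? ? ? ?]].
Qed.

End PExpansions.

Section SpacesOfExpandedFunctions.
Variables (R : realType) (r : nat) (M : vfun R r -> Prop).
Hypothesis M_subspace : right_subspace M.

Lemma fcomb_mem d (b : 'I_d -> vfun R r) a : (forall i, M (b i)) -> M (fcomb b a).
Proof.
case: M_subspace => M0 MD MZ Mb; rewrite /fcomb; elim: (index_enum _) => [|i s IH].
  by have -> : (fun x => \sum_(i <- [::]) vrscale (b i x) (a i)) = @fzero R r
    by apply/funext => x; rewrite big_nil.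
have -> : (fun x => \sum_(j <- i :: s) vrscale (b j x) (a j)) =
    fadd (frscale (b i) (a i)) (fun x => \sum_(j <- s) vrscale (b j x) (a j)).
  by apply/funext => x; rewrite big_cons.
exact: MD (MZ _ _ (Mb i)) IH.
Qed.

Definition output N (C : 'M['H[R]]_(r, N)) (A : 'M['H[R]]_N) (xi : 'cV['H[R]]_N) :
  nat -> 'cV['H[R]]_r := fun n => C *m A ^+ n *m xi.

Lemma col_entries m (xi : 'cV['H[R]]_m) : \col_i xi i 0 = xi.
Proof. by apply/matrixP => i j; rewrite (ord1 j) mxE. Qed.

(* A realized space is invariant under the backward shift: the shifted
   expansion of the function attached to xi is attached to A xi. *)
Lemma realization_R0_invariant N (C : 'M['H[R]]_(r, N)) (A : 'M['H[R]]_N) :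
  realized_by M C A -> R0_invariant M.
Proof.
move=> [realM realH] f c Mf fc; have [xi fxi] := realM f Mf.
have [g Mg gAxi] := realH (A *m xi); exists g => //.
rewrite (Pexpansion_unique fc fxi); congr has_Pexpansion: gAxi.
by apply/funext => n; rewrite exprSr -mulmxE !mulmxA.
Qed.

Section WithBasis.
Variables (d : nat) (b : 'I_d -> vfun R r) (cb : 'I_d -> nat -> 'cV['H[R]]_r).
Hypotheses (b_basis : is_basis M b) (bcb : forall i, has_Pexpansion (b i) (cb i)).

Lemma basis_span_expansion f c : M f -> has_Pexpansion f c ->
  exists a : 'I_d -> 'H[R], c = fun n => mxcols (cb^~ n) *m \col_i a i.
Proof.
case: b_basis => _ _ span Mf fc; have [a fa] := span f Mf; exists a.
exact: Pexpansion_unique fc (Pexpansion_germ (Pexpansion_fcomb a bcb) (germ_eq_sym fa)).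
Qed.

(* An R0-invariant space is realized by C = [f_0 of each basis element] and
   the matrix A expressing the shifted basis expansions in the basis. *)
Lemma R0_invariant_realization :
  R0_invariant M -> exists A : 'M['H[R]]_d, realized_by M (mxcols (cb^~ 0%N)) A.
Proof.
case: b_basis => Mb _ span inv.
have shift i : exists a : 'I_d -> 'H[R], forall n, cb i n.+1 = mxcols (cb^~ n) *m \col_j a j.
  have [g Mg gc] := inv _ _ (Mb i) (bcb i).
  by have [a ca] := basis_span_expansion Mg gc; exists a => n; rewrite (congr1 (fun s => s n) ca).
have [al alP] := choice shift; set A := mxcols (fun i => \col_j al i j).
have cbA n : mxcols (cb^~ n) = mxcols (cb^~ 0%N) *m A ^+ n.
  elim: n => [|n IH]; first by rewrite expr0 mulmx1.
  by rewrite exprSr -mulmxE mulmxA -IH -mxcolsMl; congr mxcols; apply/funext => i; rewrite alP.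
exists A; split => [f Mf | xi].
  have [a fa] := span f Mf; exists (\col_i a i).
  apply: Pexpansion_germ (germ_eq_sym fa); congr has_Pexpansion: (Pexpansion_fcomb a bcb).
  by apply/funext => n; rewrite cbA.
exists (fcomb b (fun i => xi i 0)); first exact: fcomb_mem.
congr has_Pexpansion: (Pexpansion_fcomb (fun i => xi i 0) bcb).
by apply/funext => n; rewrite cbA col_entries.
Qed.

End WithBasis.

Section DimensionOfRealization.
Variables (N : nat) (C : 'M['H[R]]_(r, N)) (A : 'M['H[R]]_N).
Variables (d : nat) (b : 'I_d -> vfun R r) (xs : 'I_d -> 'cV['H[R]]_N).
Hypotheses (realization : realized_by M C A) (b_basis : is_basis M b).
Hypothesis bxs : forall i, has_Pexpansion (b i) (output C A (xs i)).

Let X := mxcols xs.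

Lemma output_fcomb a : has_Pexpansion (fcomb b a) (output C A (X *m \col_i a i)).
Proof.
congr has_Pexpansion: (Pexpansion_fcomb a bxs).
by apply/funext => n; rewrite /output mxcolsMl mulmxA.
Qed.

Lemma basis_states_independent (al : 'cV['H[R]]_d) :
  (forall n, C *m A ^+ n *m (X *m al) = 0) -> al = 0.
Proof.
case: b_basis => _ indep _ Xal0.
have fz : germ_eq (fcomb b (fun i => al i 0)) (@fzero R r).
  apply: Pexpansion_germ_eq (output_fcomb _) _; rewrite col_entries.
  by congr has_Pexpansion: (Pexpansion0 R r); apply/funext => n; rewrite /output Xal0.
by apply/matrixP => i j; rewrite (ord1 j) mxE; exact: (indep _ fz i).
Qed.

(* d <= N, since a nonzero kernel vector of X would give a combination of the
   basis with zero output. *)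
Lemma realization_dim_le : (d <= N)%N.
Proof.
rewrite leqNgt; apply/negP => ltNd.
have [al al_nz Xal] := wide_matrix_kernel (@mulqV R) X ltNd.
move/eqP: al_nz; apply; apply: basis_states_independent => n.
by rewrite Xal mulmx0.
Qed.

(* If d = N, the N + 1 states x_1, ..., x_N, xi are dependent; as the x_i
   have independent outputs, a state xi with zero output must vanish. *)
Lemma realization_observable : d = N -> observable C A.
Proof.
move=> dN xi xi0; have ltN : (N < d + 1)%N by rewrite dN addn1.
have [w w_nz Xw] := wide_matrix_kernel (@mulqV R) (row_mx X xi) ltN.
set u := usubmx w; set del := dsubmx w; have wE : w = col_mx u del by rewrite vsubmxK.
have u0 : u = 0.
  apply: basis_states_independent => n; move: (congr1 (mulmx (C *m A ^+ n)) Xw).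
  by rewrite wE mul_row_col mulmxDr !mulmxA xi0 mul0mx addr0 mulmx0.
have xi_del : xi *m del = 0 by move: Xw; rewrite wE mul_row_col u0 mulmx0 add0r.
have del_nz : del 0 0 != 0.
  apply: contraNneq w_nz => del0; rewrite wE u0.
  have -> : del = 0 by apply/matrixP => i j; rewrite (ord1 i) (ord1 j) del0 mxE.
  by rewrite col_mx0.
apply/matrixP => k j; rewrite (ord1 j) [RHS]mxE; apply: (mulr_nz_eq0 (@mulqV R) del_nz).
have /matrixP/(_ k 0) := xi_del; rewrite [in E in E -> _]mxE big_ord1 => ->.
by rewrite mxE.
Qed.

(* Conversely, observability forces d = N: otherwise the unit states, whose
   outputs are outputs of basis combinations X beta_j, would admit a nonzero
   combination with zero output. *)
Lemma observable_realization_dim : observable C A -> d = N.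
Proof.
move=> obs; apply/eqP; rewrite eqn_leq realization_dim_le leqNgt; apply/negP => ltdN.
have span j : exists beta : 'I_d -> 'H[R],
    output C A (delta_mx j 0) = output C A (X *m \col_i beta i).
  have [f Mf fj] := realization.2 (delta_mx j 0).
  case: b_basis => _ _ spanM; have [beta fbeta] := spanM f Mf; exists beta.
  exact: Pexpansion_unique fj (Pexpansion_germ (output_fcomb beta) (germ_eq_sym fbeta)).
have [beta betaP] := choice span; set B := mxcols (fun j => \col_i beta j i).
have [ga ga_nz Bga] := wide_matrix_kernel (@mulqV R) B ltdN.
move/eqP: ga_nz; apply; apply: obs => n.
have -> : C *m A ^+ n = C *m A ^+ n *m X *m B.
  apply: matrix_colP => j; move: (congr1 (fun s => s n) (betaP j)).
  by rewrite /output !colE -!mulmxA -(colE j B) col_mxcols => ->.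
by rewrite -!mulmxA Bga !mulmx0.
Qed.

End DimensionOfRealization.

End SpacesOfExpandedFunctions.

Theorem mainTheorem9 (R : realType) (r : nat) (M : vfun R r -> Prop) :
  right_subspace M ->
  (exists d : nat, has_dim M d) ->
  (forall f, M f -> exists c, has_Pexpansion f c) ->
  (R0_invariant M <->
     exists (N : nat) (C : 'M['H[R]]_(r, N)) (A : 'M['H[R]]_N), realized_by M C A)
  /\
  (forall (N : nat) (C : 'M['H[R]]_(r, N)) (A : 'M['H[R]]_N),
     realized_by M C A ->
     forall d : nat, has_dim M d ->
       (d <= N)%N /\ (d = N <-> observable C A)).
Proof.
move=> M_sub [d0 [b0 b0_basis]] expandable; split.
  have [b0_mem _ _] := b0_basis.
  have [cb bcb] := choice (fun i => expandable _ (b0_mem i)).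
  split=> [inv | [N [C [A realization]]]]; last exact: realization_R0_invariant realization.
  have [A realization] := R0_invariant_realization M_sub b0_basis bcb inv.
  by exists d0, (mxcols (cb^~ 0%N)), A.
move=> N C A realization d [b b_basis].
have [b_mem _ _] := b_basis.
have [xs bxs] := choice (fun i => realization.1 _ (b_mem i)).
split; first exact: realization_dim_le b_basis bxs.
split; first exact: realization_observable b_basis bxs.
exact: observable_realization_dim realization b_basis bxs.
Qed.
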